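(* Consider the unknown polynomial system $\dot x=A_\star Z(x)+B_\star W(x)u$ with $x\in\mathbb{R}^n$, $u\in\mathbb{R}^m$, and data $\{\dot x^j,z^j,v^j\}_{j=0}^{T-1}$ generated by $\dot x^j=A_\star z^j+B_\star v^j+d^j$, where the unknown disturbance samples satisfy $|d^j|^2\le\omega$ for all $j=0,\dots,T-1$, for a known $\omega\ge 0$. Let $\epsilon>0$. Assume that there exist a symmetric $A_{\mathrm{i}}\in\mathbb{R}^{p\times p}$, $B_{\mathrm{i}}\in\mathbb{R}^{p\times n}$ and $\tau_0,\dots,\tau_{T-1}$ satisfying the constraints $$\begin{bmatrix}-I-\sum_{j}\tau_jc_j & B_{\mathrm{i}}^\top-\sum_{j}\tau_jb_j^\top & B_{\mathrm{i}}^\top\\ B_{\mathrm{i}}-\sum_{j}\tau_jb_j & A_{\mathrm{i}}-\sum_{j}\tau_ja_j & 0\\ B_{\mathrm{i}} & 0 & -A_{\mathrm{i}}\end{bmatrix}\preceq 0,\quad A_{\mathrm{i}}\succ 0,\quad \tau_j\ge0,$$ (sums over $j=0,\dots,T-1$), and set $\bar\zeta:=-A_{\mathrm{i}}^{-1}B_{\mathrm{i}}\in\mathbb{R}^{p\times n}$, $\bar P:=A_{\mathrm{i}}^{-1/2}$, $\bar Q:=I_n$. Assume there exist polynomials $\ell,\eta,h:\mathbb{R}^n\to\mathbb{R}$ and a polynomial $K:\mathbb{R}^n\to\mathbb{R}^m$ such that for all $x\in\mathbb{R}^n$, $\eta(x)>0$ and $H(x)\preceq0$, where $$H(x):=\begin{bmatrix}\ell(x)h(x)+\epsilon+\frac{\partial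 h}{\partial x}(x)\,\bar\zeta^\top\begin{bmatrix}Z(x)\\ W(x)K(x)\end{bmatrix} & \star & \star\\ \eta(x)\bar P\begin{bmatrix}Z(x)\\ W(x)K(x)\end{bmatrix} & -2\eta(x)I_p & \star\\ \bar Q^{1/2}\frac{\partial h}{\partial x}(x)^\top & 0 & -2\eta(x)I_n\end{bmatrix}\in\mathbb{R}^{(1+p+n)\times(1+p+n)}.$$ Then the set $\mathcal{I}:=\{x\in\mathbb{R}^n: h(x)\le0\}$ is invariant for the closed-loop system $\dot x=A_\star Z(x)+B_\star W(x)K(x)$.
   Context: $A_\star\in\mathbb{R}^{n\times N_A}$, $B_\star\in\mathbb{R}^{n\times N_B}$ are unknown constant matrices; $Z:\mathbb{R}^n\to\mathbb{R}^{N_A}$ is a known vector of monomials and $W:\mathbb{R}^n\to\mathbb{R}^{N_B\times m}$ a known matrix of monomials; $p:=N_A+N_B$. The data are $z^j=Z(x^j)$, $v^j=W(x^j)u^j$ for sampled states $x^j$ and inputs $u^j$, and $\dot x^j$ the sampled state derivative. Define $c_j:=-\omega I_n+\dot x^j(\dot x^j)^\top$, $b_j:=-\begin{bmatrix}z^j\\ v^j\end{bmatrix}(\dot x^j)^\top$, $a_j:=\begin{bmatrix}z^j\\ v^j\end{bmatrix}\begin{bmatrix}z^j\\ v^j\end{bmatrix}^\top$. $\star$ denotes blocks determined by symmetry; $M^{1/2}$ is the positive semidefinite square root; $\frac{\partial h}{\partial x}(x)$ is the gradient as a row vector. A set $\mathcal{I}$ is invariant for $\dot x=a(x)$ ($a$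 polynomial) if every maximal solution starting in $\mathcal{I}$ remains in $\mathcal{I}$ on its whole interval of existence $[0,T(x_0))$. *)

From HB Require Import structures.
From mathcomp Require Import all_boot all_order all_algebra.
From mathcomp Require Import all_classical all_reals all_analysis.
Set Implicit Arguments. Unset Strict Implicit. Unset Printing Implicit Defensive.
Import Order.TTheory GRing.Theory Num.Theory.
Import numFieldNormedType.Exports.
Local Open Scope classical_set_scope.
Local Open Scope ring_scope.

Inductive polyfun (R : realType) (n : nat) : ('cV[R]_n -> R) -> Prop :=
| pf_const (c : R) : polyfun (fun _ => c)
| pf_coord (i : 'I_n) : polyfun (fun x => x i 0)
| pf_add f g : polyfun f -> polyfun g -> polyfun (fun x => f x + g x)
| pf_mul f g : polyfun f -> polyfun g -> polyfun (fun x => f x * g x).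

Definition monomial (R : realType) (n : nat) (f : 'cV[R]_n -> R) : Prop :=
  exists e : 'I_n -> nat, forall x, f x = \prod_(i < n) (x i 0) ^+ e i.

Definition nsd (R : realType) (k : nat) (M : 'M[R]_k) : Prop :=
  M^T = M /\ forall v : 'cV[R]_k, (v^T *m M *m v) 0 0 <= 0.
Definition psd (R : realType) (k : nat) (M : 'M[R]_k) : Prop :=
  M^T = M /\ forall v : 'cV[R]_k, 0 <= (v^T *m M *m v) 0 0.
Definition pd (R : realType) (k : nat) (M : 'M[R]_k) : Prop :=
  M^T = M /\ forall v : 'cV[R]_k, v != 0 -> 0 < (v^T *m M *m v) 0 0.

Definition grad (R : realType) (n : nat) (h : 'cV[R]_n -> R) (x : 'cV[R]_n)
  : 'rV[R]_n := \row_(i < n) derive h x (delta_mx i 0).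

Definition ode_solution (R : realType) (n : nat) (a : 'cV[R]_n -> 'cV[R]_n)
  (x0 : 'cV[R]_n) (T : \bar R) (phi : R -> 'cV[R]_n) : Prop :=
  (0%:E < T)%E /\ phi 0 = x0 /\
  {within [set t : R | 0 <= t /\ (t%:E < T)%E], continuous phi} /\
  (forall t : R, 0 < t -> (t%:E < T)%E ->
     derivable phi t 1 /\ derive1 phi t = a (phi t)).

Definition maximal_solution (R : realType) (n : nat) (a : 'cV[R]_n -> 'cV[R]_n)
  (x0 : 'cV[R]_n) (T : \bar R) (phi : R -> 'cV[R]_n) : Prop :=
  ode_solution a x0 T phi /\
  ~ (exists (T' : \bar R) (psi : R -> 'cV[R]_n),
        (T < T')%E /\ ode_solution a x0 T' psi /\
        (forall t : R, 0 <= t -> (t%:E < T)%E -> psi t = phi t)).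

Definition invariant_set (R : realType) (n : nat) (a : 'cV[R]_n -> 'cV[R]_n)
  (I : set 'cV[R]_n) : Prop :=
  forall (x0 : 'cV[R]_n) (T : \bar R) (phi : R -> 'cV[R]_n),
    I x0 -> maximal_solution a x0 T phi ->
    forall t : R, 0 <= t -> (t%:E < T)%E -> I (phi t).

From HB Require Import structures.
From mathcomp Require Import all_boot all_order all_algebra.
From mathcomp Require Import all_classical all_reals all_analysis.
From mathcomp Require Import ring lra.
Import Order.TTheory GRing.Theory Num.Theory.
Import numFieldNormedType.Exports.
Local Open Scope classical_set_scope.
Local Open Scope ring_scope.

(* Write E = [A* B*] for the unknown parameters and zetab = - Ai^-1 Bi.
   After elementary facts on quadratic forms (block expansion, Cauchy-Schwarz),
   the proof combines three independent facts, developed in this order.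
   1. Data consistency (S-procedure): each sample xd_j = E zv_j + d_j with
      |d_j|^2 <= omega makes the j-th sample form nonpositive at (w, E^T w);
      testing the LMI at (w, E^T w, Ai^-1 Bi w) then shows that E^T lies in the
      ellipsoid (E^T - zetab)^T Ai (E^T - zetab) <= I.
   2. Robust decrease: testing H(x) <= 0 at (1, Pbar zk / 2, grad h^T / (2 eta))
      and bounding the deviation E^T - zetab by Young's inequality (with the
      weight Pbar = Ai^-1/2) yields grad h(x) . f(x) <= - l(x) h(x) - eps for
      the closed-loop vector field f.
   3. Barrier argument: a scalar comparison lemma (at the last zero of h o phi
      the derivative is negative) shows that the sublevel set {h <= 0} of such
      a barrier function is invariant.
   The main theorem chains 1, 2 and 3; polynomiality of h and l only serves
   to make h differentiable and l continuous. *)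

Set Implicit Arguments. Unset Strict Implicit.

Section QuadraticForms.
Variable R : realType.

Lemma mxDE m n (A B : 'M[R]_(m, n)) i j : (A + B) i j = A i j + B i j.
Proof. by rewrite mxE. Qed.
Lemma mxNE m n (A : 'M[R]_(m, n)) i j : (- A) i j = - A i j.
Proof. by rewrite mxE. Qed.
Lemma mxZE m n a (A : 'M[R]_(m, n)) i j : (a *: A) i j = a * A i j.
Proof. by rewrite mxE. Qed.

Lemma qf_block m1 m2 k (A : 'M[R]_m1) (B : 'M[R]_(m1, m2)) (C : 'M[R]_(m2, m1))
    (D : 'M[R]_m2) (a : 'M[R]_(m1, k)) (b : 'M[R]_(m2, k)) :
  (col_mx a b)^T *m block_mx A B C D *m col_mx a b =
  a^T *m A *m a + a^T *m B *m b + (b^T *m C *m a + b^T *m D *m b).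
Proof. by rewrite tr_col_mx mul_row_block mul_row_col !mulmxDl addrACA. Qed.

Lemma bilinear_trE k1 k2 (M : 'M[R]_(k1, k2)) (u : 'cV[R]_k1) (v : 'cV[R]_k2) :
  (u^T *m M *m v) 0 0 = (v^T *m M^T *m u) 0 0.
Proof.
have -> : (u^T *m M *m v) 0 0 = (u^T *m M *m v)^T 0 0 by rewrite [RHS]mxE.
by rewrite !trmx_mul trmxK mulmxA.
Qed.

Lemma bilinear_sumE k1 k2 T (tau : 'I_T -> R) (F : 'I_T -> 'M[R]_(k1, k2))
    (u : 'cV[R]_k1) (v : 'cV[R]_k2) :
  (u^T *m (\sum_j tau j *: F j) *m v) 0 0 = \sum_j tau j * (u^T *m F j *m v) 0 0.
Proof.
rewrite mulmx_sumr mulmx_suml summxE; apply: eq_bigr => j _.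
by rewrite -scalemxAr -scalemxAl mxZE.
Qed.

Lemma dotE n (u v : 'cV[R]_n) : (u^T *m v) 0 0 = \sum_i u i 0 * v i 0.
Proof. by rewrite !mxE; apply: eq_bigr => i _; rewrite mxE. Qed.

Lemma dotC n (a b : 'cV[R]_n) : (b^T *m a) 0 0 = (a^T *m b) 0 0.
Proof. by rewrite !dotE; apply: eq_bigr => i _; rewrite mulrC. Qed.

Lemma dot_ge0 n (a : 'cV[R]_n) : 0 <= (a^T *m a) 0 0.
Proof. by rewrite dotE; apply: sumr_ge0 => i _; rewrite -expr2 sqr_ge0. Qed.

(* Cauchy-Schwarz, via the identity
   sum_i (D w_i - S d_i)^2 = D (D W - S^2) with D = |d|^2, S = d.w, W = |w|^2. *)
Lemma cauchy_schwarz n (d w : 'cV[R]_n) :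
  (\sum_i d i 0 * w i 0) ^+ 2 <= (\sum_i d i 0 ^+ 2) * (\sum_i w i 0 ^+ 2).
Proof.
set D := \sum_i d i 0 ^+ 2; set S := \sum_i d i 0 * w i 0.
set W := \sum_i w i 0 ^+ 2.
have D_ge0 : 0 <= D by apply: sumr_ge0 => i _; exact: sqr_ge0.
have expand : \sum_i (D * w i 0 - S * d i 0) ^+ 2 = D * (D * W - S ^+ 2).
  rewrite (eq_bigr (fun i => D ^+ 2 * w i 0 ^+ 2 - (2 * D * S) * (d i 0 * w i 0)
                            + S ^+ 2 * d i 0 ^+ 2)); last by move=> i _; ring.
  by rewrite !big_split /= sumrN -!mulr_sumr -/D -/S -/W; ring.
move: D_ge0; rewrite le_eqVlt => /orP[/eqP D_eq0|D_gt0]; last first.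
- have : 0 <= D * (D * W - S ^+ 2).
    by rewrite -expand; apply: sumr_ge0 => i _; exact: sqr_ge0.
  by rewrite pmulr_rge0 // subr_ge0.
- have d0 i : d i 0 = 0.
    apply/eqP; rewrite -sqrf_eq0 eq_le sqr_ge0 andbT D_eq0 /D.
    by rewrite (bigD1 i) //= lerDl; apply: sumr_ge0 => k _; exact: sqr_ge0.
  have -> : S = 0 by rewrite /S big1 // => i _; rewrite d0 mul0r.
  by rewrite -D_eq0 expr0n mul0r.
Qed.

Lemma noise_bound n (d w : 'cV[R]_n) (omega : R) :
  \sum_i (d i 0) ^+ 2 <= omega ->
  ((d^T *m w)^T *m (d^T *m w)) 0 0 <= omega * (w^T *m w) 0 0.
Proof.
move=> Hd.
have -> : ((d^T *m w)^T *m (d^T *m w)) 0 0 = (\sum_i d i 0 * w i 0) ^+ 2.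
  rewrite !mxE big_ord1 !mxE expr2.
  by congr (_ * _); apply: eq_bigr => i _; rewrite mxE.
have -> : (w^T *m w) 0 0 = \sum_i w i 0 ^+ 2.
  by rewrite dotE; apply: eq_bigr => i _; rewrite expr2.
have W_ge0 : 0 <= \sum_i w i 0 ^+ 2 by apply: sumr_ge0 => i _; exact: sqr_ge0.
have := cauchy_schwarz d w.
move: W_ge0 Hd; set S := _ ^+ 2; set D := \sum_i _ ^+ 2; set W := \sum_i w i 0 ^+ 2.
nra.
Qed.

End QuadraticForms.

Section DataConsistency.
Variable R : realType.

(* One data sample xd = E zv + d, with the sample matrices
   c = -omega I + xd xd^T, b = -zv xd^T and a = zv zv^T of the LMI, evaluated
   at (w, E^T w): the cross terms reassemble into the residual (d.w)^2. *)
Lemma data_sample_form n p (E : 'M[R]_(n, p)) zv (xd d w : 'cV[R]_n) (omega : R) :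
  xd = E *m zv + d ->
  let y := E^T *m w in
  (w^T *m (- (omega *: 1%:M) + xd *m xd^T) *m w + w^T *m (- (zv *m xd^T))^T *m y
  + (y^T *m (- (zv *m xd^T)) *m w + y^T *m (zv *m zv^T) *m y)) 0 0
  = - (omega * (w^T *m w) 0 0) + ((d^T *m w)^T *m (d^T *m w)) 0 0.
Proof.
move=> Hxd y.
have -> : d = xd - E *m zv by rewrite Hxd addrC addKr.
rewrite /y !trmx_mul !trmxK !raddfB !raddfN /= !trmx_mul ?trmxK.
rewrite !(mulmxDl, mulmxDr, mulmxBl, mulmxBr, mulNmx, mulmxN, mul_scalar_mx,
          scalemxAl, scalemxAr, mulmx1, mul1mx) /=.
rewrite !mulmxA -?scalemxAr ?mulmx1 -?scalemxAl !(mxDE, mxNE, mxZE).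
lra.
Qed.

(* The LMI is tested at (w, E^T w, Ai^-1 Bi w). *)
Lemma true_parameter_in_ellipsoid n p T (E : 'M[R]_(n, p))
    (zv : 'I_T -> 'cV[R]_p) (xdot d : 'I_T -> 'cV[R]_n) (omega : R)
    (tau : 'I_T -> R) (Ai : 'M[R]_p) (Bi : 'M[R]_(p, n)) :
  (forall j, xdot j = E *m zv j + d j) ->
  (forall j, \sum_i (d j i 0) ^+ 2 <= omega) ->
  (forall j, 0 <= tau j) -> Ai \in unitmx -> Ai^T = Ai ->
  nsd (block_mx
     (- 1%:M - \sum_(j < T) tau j *: (- (omega *: 1%:M) + xdot j *m (xdot j)^T))
     (row_mx (Bi^T - \sum_(j < T) tau j *: (- (zv j *m (xdot j)^T))^T) Bi^T)
     (col_mx (Bi - \sum_(j < T) tau j *: (- (zv j *m (xdot j)^T))) Bi)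
     (block_mx (Ai - \sum_(j < T) tau j *: (zv j *m (zv j)^T)) 0 0 (- Ai))) ->
  forall w : 'cV[R]_n, let e := E^T + invmx Ai *m Bi in
  ((e *m w)^T *m Ai *m (e *m w)) 0 0 <= (w^T *m w) 0 0.
Proof.
move=> Hx Hd Htau Ai_unit Ai_sym [_ LMI] w /=.
set y := E^T *m w; set s := invmx Ai *m Bi *m w.
have As : Ai *m s = Bi *m w by rewrite /s !mulmxA mulmxV // mul1mx.
have Bwy : (w^T *m Bi^T *m y) 0 0 = (y^T *m Bi *m w) 0 0.
  by rewrite bilinear_trE trmxK.
have Bws : (w^T *m Bi^T *m s) 0 0 = (s^T *m Bi *m w) 0 0.
  by rewrite bilinear_trE trmxK.
have Ass : (s^T *m Ai *m s) 0 0 = (s^T *m Bi *m w) 0 0.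
  by rewrite -mulmxA As mulmxA.
have Ays : (y^T *m Ai *m s) 0 0 = (y^T *m Bi *m w) 0 0.
  by rewrite -mulmxA As mulmxA.
have Asy : (s^T *m Ai *m y) 0 0 = (y^T *m Ai *m s) 0 0.
  by rewrite bilinear_trE Ai_sym.
have data_nonpos :
  \sum_j tau j * (w^T *m (- (omega *: 1%:M) + xdot j *m (xdot j)^T) *m w) 0 0
  + \sum_j tau j * (w^T *m (- (zv j *m (xdot j)^T))^T *m y) 0 0
  + (\sum_j tau j * (y^T *m - (zv j *m (xdot j)^T) *m w) 0 0
  + \sum_j tau j * (y^T *m (zv j *m (zv j)^T) *m y) 0 0) <= 0.
  rewrite -!big_split /=; apply: sumr_le0 => j _.
  rewrite -!mulrDr -!mxDE (data_sample_form w omega (Hx j)).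
  apply: mulr_ge0_le0 => //.
  by have := noise_bound w (Hd j); lra.
have := LMI (col_mx w (col_mx y s)).
rewrite !qf_block tr_col_mx mul_mx_row !mul_row_col.
rewrite !(mulmxDl, mulmxDr, mulmxBl, mulmxBr, mulNmx, mulmxN, mulmx0, mul0mx,
          mulmx1, addr0, add0r).
rewrite !(mxDE, mxNE) !bilinear_sumE Bwy Bws Ass.
rewrite -/y -/s !raddfD /= !mulmxDl !mxDE Asy Ays Ass.
lra.
Qed.

End DataConsistency.

Section RobustDecrease.
Variable R : realType.
Variables (p n : nat) (Ai P : 'M[R]_p) (g : 'rV[R]_n) (zk : 'cV[R]_p) (eta : R).
Hypotheses (eta_gt0 : 0 < eta) (Ai_unit : Ai \in unitmx) (Ai_sym : Ai^T = Ai)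
           (P_sym : P^T = P) (P_sq : P *m P = invmx Ai).

(* Young's inequality through the weight P = Ai^-1/2: a deviation e of the
   parameter lying in the ellipsoid e^T Ai e <= I perturbs g zeta^T zk by at
   most (eta^2 |P zk|^2 + |g|^2) / (2 eta).  It is 2 eta (a.b) <= |eta b|^2 + |a|^2
   for b = P zk and a = P Ai e g^T, for which a.b = g e^T zk and |a|^2 <= |g|^2. *)
Lemma ellipsoid_deviation_bound (e : 'M[R]_(p, n)) :
  (forall w : 'cV[R]_n, ((e *m w)^T *m Ai *m (e *m w)) 0 0 <= (w^T *m w) 0 0) ->
  2 * eta * (g *m e^T *m zk) 0 0 <=
    eta ^+ 2 * ((P *m zk)^T *m (P *m zk)) 0 0 + (g *m g^T) 0 0.
Proof.
move=> ellipsoid.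
set b := P *m zk; set a := P *m (Ai *m (e *m g^T)).
have ab : (a^T *m b) 0 0 = (g *m e^T *m zk) 0 0.
  rewrite /a /b !trmx_mul trmxK Ai_sym P_sym !mulmxA -(mulmxA _ P P) P_sq.
  by rewrite -(mulmxA _ Ai (invmx Ai)) mulmxV // mulmx1.
have aa : (a^T *m a) 0 0 <= (g *m g^T) 0 0.
  have := ellipsoid g^T; rewrite trmxK.
  rewrite /a !trmx_mul Ai_sym P_sym !mulmxA -(mulmxA _ P P) P_sq.
  by rewrite -(mulmxA _ Ai (invmx Ai)) mulmxV // mulmx1.
have := dot_ge0 (eta *: b - a).
rewrite mulmxBr ![(_ - _)^T]linearB /= ![(_ *: _)^T]linearZ /= !mulmxBl.
rewrite -!scalemxAl -!scalemxAr !(mxDE, mxNE, mxZE) (dotC a b) ab expr2.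
by nra.
Qed.

(* Testing the certificate H(x) <= 0 at (1, P zk / 2, g^T / (2 eta)) gives
   c + g zetab^T zk + eta |P zk|^2 / 2 + |g|^2 / (2 eta) <= 0. *)
Lemma certificate_bound (zetab : 'M[R]_(p, n)) (c : R) :
  nsd (block_mx (c%:M + g *m zetab^T *m zk)
          (row_mx (eta *: (P *m zk))^T ((1%:M : 'M[R]_n) *m g^T)^T)
          (col_mx (eta *: (P *m zk)) ((1%:M : 'M[R]_n) *m g^T))
          (block_mx (- (2 * eta) *: (1%:M : 'M[R]_p)) 0 0
                    (- (2 * eta) *: (1%:M : 'M[R]_n)))) ->
  c + (g *m zetab^T *m zk) 0 0 + eta * ((P *m zk)^T *m (P *m zk)) 0 0 / 2
    + (2 * eta)^-1 * (g *m g^T) 0 0 <= 0.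
Proof.
move=> [_ H]; set b := P *m zk; set k := (2 * eta)^-1.
have := H (col_mx 1%:M (col_mx (2^-1 *: b) (k *: g^T))).
rewrite !qf_block tr_col_mx mul_mx_row !mul_row_col -/b trmx1.
rewrite !(mul1mx, mulmx1, mulmx0, mul0mx, addr0, add0r).
rewrite ![(_ *: _)^T]linearZ /= trmxK -!scalemxAl -!scalemxAr !mulmx1 -!scalemxAl.
rewrite !(mxDE, mxZE).
have -> : (c%:M : 'M[R]_1) 0 0 = c by rewrite mxE eqxx mulr1n.
have eta_neq0 : eta != 0 by rewrite gt_eqF.
have -> : k * (k * (- (2 * eta) * (g *m g^T) 0 0)) = - (k * (g *m g^T) 0 0).
  by rewrite /k; field.
have -> : 2^-1 * (2^-1 * (- (2 * eta) * (b^T *m b) 0 0)) = - (eta * (b^T *m b) 0 0 / 2).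
  by field.
by rewrite (mulrC 2^-1 _) mulrA; lra.
Qed.

Lemma robust_decrease (e zetab : 'M[R]_(p, n)) (c : R) :
  (forall w : 'cV[R]_n, ((e *m w)^T *m Ai *m (e *m w)) 0 0 <= (w^T *m w) 0 0) ->
  nsd (block_mx (c%:M + g *m zetab^T *m zk)
          (row_mx (eta *: (P *m zk))^T ((1%:M : 'M[R]_n) *m g^T)^T)
          (col_mx (eta *: (P *m zk)) ((1%:M : 'M[R]_n) *m g^T))
          (block_mx (- (2 * eta) *: (1%:M : 'M[R]_p)) 0 0
                    (- (2 * eta) *: (1%:M : 'M[R]_n)))) ->
  (g *m (zetab + e)^T *m zk) 0 0 <= - c.
Proof.
move=> /ellipsoid_deviation_bound dev /certificate_bound cert.
rewrite raddfD /= mulmxDr mulmxDl mxDE.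
move: dev cert; set B : R := ((P *m zk)^T *m (P *m zk)) 0 0.
set G : R := (g *m g^T) 0 0 => dev cert.
have k_gt0 : 0 < (2 * eta)^-1 by rewrite invr_gt0 mulr_gt0.
have := ler_wpM2l (ltW k_gt0) dev.
have -> : (2 * eta)^-1 * (2 * eta * (g *m e^T *m zk) 0 0) = (g *m e^T *m zk) 0 0.
  by rewrite mulrA mulVf ?mul1r // mulf_neq0 // gt_eqF.
have -> : (2 * eta)^-1 * (eta ^+ 2 * B + G) = eta * B / 2 + (2 * eta)^-1 * G.
  by field; rewrite gt_eqF.
lra.
Qed.

End RobustDecrease.

Section Barrier.
Variable R : realType.

Lemma within_continuous_ball (A : set R) (f : R -> R) x :
  {within A, continuous f} -> A x -> forall e, 0 < e ->
  exists2 del, 0 < del & forall y, A y -> `|x - y| < del -> `|f x - f y| < e.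
Proof.
move=> /subspace_continuousP /[apply] /cvgrPdist_lt cvg_fx e e_gt0.
have := cvg_fx e e_gt0; rewrite near_withinE => /nbhs_ballP [del del_gt0 Hdel].
by exists del => // y Ay xy; apply: Hdel.
Qed.

Variables (a b : R) (f : R -> R).
Hypotheses (f_cont : {within `[a, b], continuous f}).

Let in_ab s : a <= s <= b -> [set` `[a, b]] s.
Proof. by move=> s_ab; rewrite /= in_itv. Qed.

(* If f starts nonpositive and ends positive, there is a last zero t0 of f
   after which f stays positive: t0 is the supremum of {t | f t <= 0}. *)
Lemma last_zero_before_positive : a <= b -> f a <= 0 -> 0 < f b ->
  exists t0, [/\ a <= t0, t0 < b, f t0 = 0 & forall s, t0 < s -> s <= b -> 0 < f s].
Proof.
move=> ab fa_le0 fb_gt0.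
set S := [set t | (a <= t <= b) /\ f t <= 0].
have Sa : S a by split; rewrite ?lexx.
have S_sup : has_sup S by split; [exists a | exists b => t [/andP[_ ->]]].
set t0 := sup S.
have t0_ge : a <= t0 by exact: sup_upper_bound.
have t0_le : t0 <= b by apply: ge_sup; [exists a | move=> t [/andP[_ ->]]].
have t0_in : [set` `[a, b]] t0 by apply: in_ab; rewrite t0_ge.
have f_t0_le0 : f t0 <= 0.
  rewrite leNgt; apply/negP => f_t0_gt0.
  have [del del_gt0 Hdel] := within_continuous_ball f_cont t0_in f_t0_gt0.
  have [t St t_gt] := sup_adherent del_gt0 S_sup.
  have t_le_t0 : t <= t0 by exact: sup_upper_bound S_sup _ St.
  case: St => /andP[t_ge t_le] ft.
  have := Hdel t (in_ab (s := t) ltac:(by rewrite t_ge t_le)).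
  rewrite ger0_norm ?subr_ge0 // ltr_norml => /(_ ltac:(rewrite -/t0 in t_gt; lra)).
  lra.
have t0_lt : t0 < b by rewrite lt_neqAle t0_le andbT; apply: contraTneq f_t0_le0 => ->; rewrite -ltNge.
have f_pos s : t0 < s -> s <= b -> 0 < f s.
  move=> t0s sb; rewrite ltNge; apply/negP => fs.
  have : s <= t0 by apply: sup_upper_bound => //; split => //; rewrite sb (le_trans t0_ge) ?ltW.
  lra.
exists t0; split => //.
apply/eqP; rewrite eq_le f_t0_le0 /= leNgt; apply/negP => f_t0_lt0.
have [del del_gt0 Hdel] :=
  within_continuous_ball f_cont t0_in (ltac:(by rewrite oppr_gt0) : 0 < - f t0).
set s := Order.min (t0 + del / 2) b.
have s_gt : t0 < s by rewrite lt_min t0_lt andbT; lra.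
have s_le : s <= b by rewrite ge_min lexx orbT.
have s_near : s <= t0 + del / 2 by rewrite ge_min lexx.
have := Hdel s (in_ab (s := s) ltac:(rewrite s_le andbT; lra)).
rewrite distrC ger0_norm ?subr_ge0 ?ltW // ltr_norml => /(_ ltac:(lra)).
have := f_pos s s_gt s_le; lra.
Qed.

(* Comparison principle behind the barrier certificate: if f' <= - p f - eps
   on ]a, b[ with eps > 0 and f (a) <= 0, then f (b) <= 0.  At the last zero t0
   of f, continuity of p f makes f' < 0 just after t0, so f cannot leave 0. *)
Lemma barrier_comparison (p : R -> R) (eps : R) : a <= b -> 0 < eps ->
  {within `[a, b], continuous (fun s => p s * f s)} ->
  (forall c, a < c -> c < b -> derivable f c 1 /\ derive1 f c <= - (p c * f c) - eps) ->
  f a <= 0 -> f b <= 0.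
Proof.
move=> ab eps_gt0 pf_cont Hder fa_le0.
rewrite leNgt; apply/negP => fb_gt0.
have [t0 [t0_ge t0_lt f_t0 f_pos]] := last_zero_before_positive ab fa_le0 fb_gt0.
have t0_in : [set` `[a, b]] t0 by apply: in_ab; rewrite t0_ge ltW.
have [del del_gt0 Hdel] := within_continuous_ball pf_cont t0_in eps_gt0.
set s := Order.min (t0 + del / 2) b.
have s_gt : t0 < s by rewrite lt_min t0_lt andbT; lra.
have s_le : s <= b by rewrite ge_min lexx orbT.
have s_near : s <= t0 + del / 2 by rewrite ge_min lexx.
have f_decr : {in `[t0, s] &, {homo f : x y /~ x <= y}}.
  apply: ler0_derive1_le_cc.
  - by move=> c; rewrite in_itv /= => /andP[c1 c2]; apply: (Hder c _ _).1; lra.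
  - move=> c; rewrite in_itv /= => /andP[c1 c2].
    have [_ f'c] := Hder c ltac:(lra) ltac:(lra).
    have := Hdel c (in_ab (s := c) ltac:(apply/andP; split; lra)).
    rewrite /= f_t0 mulr0 sub0r normrN distrC ger0_norm ?subr_ge0 ?(ltW c1) //.
    by move=> /(_ ltac:(lra)); rewrite ltr_norml => /andP[pfc _]; lra.
  - apply: continuous_subspaceW f_cont => y /=; rewrite !in_itv /= => /andP[y1 y2].
    by apply/andP; split; lra.
have : f s <= f t0 by apply: f_decr; rewrite ?in_itv /= ?lexx ?ltW.
by have := f_pos s s_gt s_le; lra.
Qed.

End Barrier.

Section Invariance.
Variable R : realType.

Lemma polyfun_differentiable n (f : 'cV[R]_n -> R) :
  polyfun f -> forall x, differentiable f x.
Proof.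
elim=> [c|i|g k _ Hg _ Hk|g k _ Hg _ Hk] x.
- exact: differentiable_cst.
- exact: differentiable_coord.
- exact: differentiableD.
- exact: differentiableM.
Qed.

(* Positive definite matrices are invertible: a kernel vector w would give
   w^T A w = 0. *)
Lemma pd_unitmx k (A : 'M[R]_k) : pd A -> A \in unitmx.
Proof.
move=> [_ A_pos]; rewrite -row_free_unit -kermx_eq0; apply/eqP/row_matrixP => i.
rewrite row0; apply/eqP; apply: contraT => ker_i.
have w_neq0 : (row i (kermx A))^T != 0.
  by apply: contra ker_i => /eqP w0; rewrite -[row _ _]trmxK w0 trmx0.
have := A_pos _ w_neq0.
by rewrite trmxK -row_mul mulmx_ker row0 mul0mx mxE ltxx.
Qed.

Lemma derive1_comp_grad n (h : 'cV[R]_n -> R) (phi : R -> 'cV[R]_n) c :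
  (forall x, differentiable h x) -> derivable phi c 1 ->
  derivable (h \o phi) c 1 /\
  derive1 (h \o phi) c = (grad h (phi c) *m derive1 phi c) 0 0.
Proof.
move=> dh /derivable1_diffP dphi.
have dc : differentiable (h \o phi) c by apply: differentiable_comp.
split; first exact/derivable1_diffP.
rewrite derive1E' // diff_comp // /= -derive1E' //.
set v := derive1 phi c; rewrite {1}(matrix_sum_delta v).
under eq_bigr => i _ do rewrite big_ord1.
rewrite linear_sum /= mxE; apply: eq_bigr => i _.
by rewrite linearZ /= mxE deriveE // mulrC.
Qed.

Lemma within_continuous_comp n (A : set R) (phi : R -> 'cV[R]_n) (g : 'cV[R]_n -> R) :
  {within A, continuous phi} -> continuous g -> {within A, continuous (g \o phi)}.
Proof.
move=> phi_cont g_cont x.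
exact: (@continuous_comp _ _ _ (phi : subspace A -> _) g x (phi_cont x) (g_cont _)).
Qed.

(* Barrier certificate: if grad h . a <= - l h - eps everywhere, with eps > 0,
   h differentiable and l continuous, then the sublevel set {h <= 0} is
   invariant for xdot = a(x): along a solution, f = h o phi satisfies
   f' <= - (l o phi) f - eps, and the comparison lemma applies on [0, t]. *)
Lemma sublevel_invariant n (a : 'cV[R]_n -> 'cV[R]_n) (h l : 'cV[R]_n -> R) (eps : R) :
  0 < eps -> (forall x, differentiable h x) -> continuous l ->
  (forall x, (grad h x *m a x) 0 0 <= - (l x * h x + eps)) ->
  invariant_set a [set x | h x <= 0].
Proof.
move=> eps_gt0 h_diff l_cont decrease x0 Tend phi h_x0 [[_ [phi0 [phi_cont phi_der]]] _].
move=> t t_ge0 t_lt /=.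
have [->|t_neq0] := eqVneq t 0; first by rewrite phi0.
have t_gt0 : 0 < t by rewrite lt_def t_neq0 t_ge0.
have sub : `[0, t] `<=` [set s : R | 0 <= s /\ (s%:E < Tend)%E].
  move=> s /=; rewrite in_itv /= => /andP[s_ge0 s_le]; split => //.
  by apply: le_lt_trans t_lt; rewrite lee_fin.
have phi_cont_t := continuous_subspaceW sub phi_cont.
have h_cont : continuous h by move=> x; exact: differentiable_continuous.
have lh_cont : continuous (fun x => l x * h x).
  by move=> x; exact: (continuousM (l_cont x) (h_cont x)).
have hphi_cont := within_continuous_comp phi_cont_t h_cont.
apply: (barrier_comparison (p := l \o phi) hphi_cont (ltW t_gt0) eps_gt0).
- exact: (within_continuous_comp _ lh_cont).
- move=> c c_gt0 c_lt.
  have c_lt_end : (c%:E < Tend)%E by apply: lt_trans t_lt; rewrite lte_fin.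
  have [phi_der_c phi'_c] := phi_der c c_gt0 c_lt_end.
  have [hphi_der hphi'] := derive1_comp_grad h_diff phi_der_c.
  by split => //; rewrite hphi' phi'_c /=; have := decrease (phi c); lra.
- by rewrite /= phi0.
Qed.

End Invariance.

Unset Implicit Arguments.

Theorem mainTheorem3 (R : realType) (n m NA NB T : nat)
  (* unknown system matrices and known monomial maps *)
  (Astar : 'M[R]_(n, NA)) (Bstar : 'M[R]_(n, NB))
  (Z : 'cV[R]_n -> 'cV[R]_NA) (W : 'cV[R]_n -> 'M[R]_(NB, m))
  (HZ : forall i : 'I_NA, monomial (fun x => Z x i 0))
  (HW : forall (i : 'I_NB) (k : 'I_m), monomial (fun x => W x i k))
  (* data *)
  (xs : 'I_T -> 'cV[R]_n) (us : 'I_T -> 'cV[R]_m)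
  (xdot : 'I_T -> 'cV[R]_n) (z : 'I_T -> 'cV[R]_NA) (v : 'I_T -> 'cV[R]_NB)
  (Hz : forall j, z j = Z (xs j)) (Hv : forall j, v j = W (xs j) *m us j)
  (d : 'I_T -> 'cV[R]_n) (omega : R) (Homega : 0 <= omega)
  (Hdata : forall j, xdot j = Astar *m z j + Bstar *m v j + d j)
  (Hd : forall j, \sum_(i < n) (d j i 0) ^+ 2 <= omega)
  (eps : R) (Heps : 0 < eps)
  (* LMI certificate *)
  (Ai : 'M[R]_(NA + NB)) (Bi : 'M[R]_(NA + NB, n)) (tau : 'I_T -> R)
  (Htau : forall j, 0 <= tau j)
  (HAi : pd Ai)
  (HLMI :
     let zv := fun j => col_mx (z j) (v j) in
     let c := fun j => - (omega *: (1%:M : 'M[R]_n)) + xdot j *m (xdot j)^T in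
     let b := fun j => - (zv j *m (xdot j)^T) in
     let a := fun j => zv j *m (zv j)^T in
     nsd (block_mx
            (- 1%:M - \sum_(j < T) tau j *: c j)
            (row_mx (Bi^T - \sum_(j < T) tau j *: (b j)^T) Bi^T)
            (col_mx (Bi - \sum_(j < T) tau j *: b j) Bi)
            (block_mx (Ai - \sum_(j < T) tau j *: a j) 0 0 (- Ai))))
  (* Pbar = Ai^{-1/2}: the PSD square root of Ai^{-1} *)
  (Pbar : 'M[R]_(NA + NB)) (HPbar_psd : psd Pbar)
  (HPbar_sq : Pbar *m Pbar = invmx Ai)
  (* SOS-type certificate *)
  (l eta h : 'cV[R]_n -> R) (K : 'cV[R]_n -> 'cV[R]_m)
  (Hl : polyfun l) (Heta_poly : polyfun eta) (Hh : polyfun h)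
  (HK : forall k : 'I_m, polyfun (fun x => K x k 0))
  (Heta : forall x, 0 < eta x)
  (HH : forall x : 'cV[R]_n,
     let zetab : 'M[R]_(NA + NB, n) := - (invmx Ai *m Bi) in
     let Qbar_sqrt : 'M[R]_n := 1%:M in (* Qbar = I_n, so Qbar^{1/2} = I_n *)
     let zk := col_mx (Z x) (W x *m K x) in
     let H11 : 'M[R]_1 :=
       (l x * h x + eps)%:M + grad h x *m zetab^T *m zk in
     let H21 : 'M[R]_(NA + NB, 1) := eta x *: (Pbar *m zk) in
     let H31 : 'M[R]_(n, 1) := Qbar_sqrt *m (grad h x)^T in
     nsd (block_mx H11 (row_mx H21^T H31^T) (col_mx H21 H31)
            (block_mx (- (2 * eta x) *: (1%:M : 'M[R]_(NA + NB))) 0 0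
                      (- (2 * eta x) *: (1%:M : 'M[R]_n))))) :
  invariant_set (fun x => Astar *m Z x + Bstar *m (W x *m K x))
            [set x | h x <= 0].
Proof.
set E := row_mx Astar Bstar.
have data j : xdot j = E *m col_mx (z j) (v j) + d j by rewrite Hdata mul_row_col.
have Ai_unit := pd_unitmx HAi.
have in_ellipsoid := true_parameter_in_ellipsoid data Hd Htau Ai_unit HAi.1 HLMI.
apply: (sublevel_invariant (l := l) Heps (polyfun_differentiable Hh)).
- by move=> x; apply: differentiable_continuous; exact: polyfun_differentiable.
- move=> x.
  have := robust_decrease (Heta x) Ai_unit HAi.1 HPbar_psd.1 HPbar_sq in_ellipsoid (HH x).
  by cbv zeta; rewrite addrCA addNr addr0 trmxK -mulmxA /E mul_row_col.
Qed.
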